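(* Assume the setup in the context, with the fine-tuning regime and local smoothness with radius $r\ge 2\sqrt{C}$, and let $0<\epsilon\le 1$ be such that $|\langle\tau_i,\tau_j\rangle|\le\epsilon\|\tau_i\|\|\tau_j\|$ for all $i\neq j$. Let $\mathbf{W}_e\in\mathbb{R}^{T\times M}$ have every column in the probability simplex $\Delta^{T-1}$, define basis vectors $B_m=\sum_{j=1}^T\mathbf{W}_e[j,m]\tau_j$ for $m\in[M]$, let $\alpha\in\Delta^{M-1}$, and set $\theta^M_{\mathrm{Add}}=\theta_0+\sum_{m=1}^M\alpha_mB_m$. Then for every $i\in[T]$, $$\mathcal{L}_i(\theta^M_{\mathrm{Add}})-\mathcal{L}_i(\theta_i)\le L_iC(1+\epsilon).$$
   Context: Setup: $\theta_0\in\mathbb{R}^d$ is a pretrained parameter vector; $\theta_1,\dots,\theta_T\in\mathbb{R}^d$ are fine-tuned parameters and $\tau_i:=\theta_i-\theta_0$ are task vectors. For each task $i$, $\mathcal{L}_i:\mathbb{R}^d\to\mathbb{R}$ is a differentiable loss (population risk). Norms are Euclidean. Fine-tuning regime: $\nabla\mathcal{L}_i(\theta_i)=0$ for all $i\in[T]$, and there is $C>0$ with $\|\tau_i\|^2\le C$ for all $i$. Local smoothness with radius $r>0$: for each $i$ there is $L_i\ge 0$ such that for all $\theta$ with $\|\theta-\theta_i\|\le r$, $\big|\mathcal{L}_i(\theta)-\mathcal{L}_i(\theta_i)-\langle\theta-\theta_i,\nabla\mathcal{L}_i(\theta_i)\rangle\big|\le\frac{L_i}{2}\|\theta-\theta_i\|^2$.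 $\Delta^{K-1}=\{x\in\mathbb{R}^K: x\ge 0,\ \sum_k x_k=1\}$. *)

From HB Require Import structures.
From mathcomp Require Import all_boot all_order all_algebra.
From mathcomp Require Import all_classical all_reals all_analysis.
Set Implicit Arguments. Unset Strict Implicit. Unset Printing Implicit Defensive.
Import Order.TTheory GRing.Theory Num.Theory.
Local Open Scope ring_scope.

Definition dotv (R : realType) (d : nat) (u v : 'rV[R]_d) : R :=
  \sum_(k < d) u 0 k * v 0 k.
Definition enorm (R : realType) (d : nat) (u : 'rV[R]_d) : R :=
  Num.sqrt (dotv u u).

Definition in_simplex (R : realType) (K : nat) (x : 'I_K -> R) : Prop :=
  (forall k, 0 <= x k) /\ \sum_(k < K) x k = 1.

(* The merged model is theta_0 plus a convex combination of the task vectors,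
   with weights c = W alpha; hence theta_Add - theta_i is the same convex
   combination of the differences tau_j - tau_i.  By near-orthogonality every
   inner product <tau_j - tau_i, tau_l - tau_i> is at most 2C(1 + eps), so the
   squared distance ||theta_Add - theta_i||^2 is at most 2C(1 + eps) <= 4C.  The
   merged point thus lies in the smoothness ball of radius 2 sqrt C around the
   stationary point theta_i, and the quadratic upper bound gives
   L_i/2 * 2C(1 + eps). *)
From HB Require Import structures.
From mathcomp Require Import all_boot all_order all_algebra.
From mathcomp Require Import all_classical all_reals all_analysis.
From mathcomp Require Import ring lra.
Import Order.TTheory GRing.Theory Num.Theory.
Import numFieldNormedType.Exports.
Local Open Scope ring_scope.

Section InnerProduct.
Context {R : realType} {d : nat}.
Implicit Types u v w : 'rV[R]_d.

Lemma dotvC u v : dotv u v = dotv v u.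
Proof. by apply: eq_bigr => k _; rewrite mulrC. Qed.

Lemma dotv_ge0 u : 0 <= dotv u u.
Proof. by apply: sumr_ge0 => k _; rewrite -expr2 sqr_ge0. Qed.

Lemma enorm_sqr u : enorm u ^+ 2 = dotv u u.
Proof. by rewrite /enorm sqr_sqrtr // dotv_ge0. Qed.

Lemma enorm_ge0 u : 0 <= enorm u.
Proof. exact: sqrtr_ge0. Qed.

Lemma dotvZl a u v : dotv (a *: u) v = a * dotv u v.
Proof. by rewrite /dotv big_distrr; apply: eq_bigr => k _; rewrite !mxE -mulrA. Qed.

Lemma dotv0l v : dotv 0 v = 0.
Proof. by rewrite /dotv big1 // => k _; rewrite mxE mul0r. Qed.

Lemma dotv0r u : dotv u 0 = 0.
Proof. by rewrite dotvC dotv0l. Qed.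

Lemma dotvBl u v w : dotv (u - v) w = dotv u w - dotv v w.
Proof. by rewrite /dotv -sumrB; apply: eq_bigr => k _; rewrite !mxE mulrBl. Qed.

Lemma dotvBr u v w : dotv u (v - w) = dotv u v - dotv u w.
Proof. by rewrite ![dotv u _]dotvC dotvBl. Qed.

Lemma dotv_suml n (f : 'I_n -> 'rV[R]_d) v :
  dotv (\sum_(j < n) f j) v = \sum_(j < n) dotv (f j) v.
Proof.
rewrite /dotv exchange_big; apply: eq_bigr => k _.
by rewrite summxE big_distrl.
Qed.

Lemma dotv_sumr n (f : 'I_n -> 'rV[R]_d) u :
  dotv u (\sum_(j < n) f j) = \sum_(j < n) dotv u (f j).
Proof. by rewrite dotvC dotv_suml; apply: eq_bigr => j _; rewrite dotvC. Qed.

Lemma dotv_convex_le n (c : 'I_n -> R) (v : 'I_n -> 'rV[R]_d) K :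
  in_simplex c -> (forall j l, dotv (v j) (v l) <= K) ->
  dotv (\sum_(j < n) c j *: v j) (\sum_(j < n) c j *: v j) <= K.
Proof.
move=> [c_ge0 c_sum1] vK.
rewrite dotv_suml.
under eq_bigr => j _ do rewrite dotvZl dotv_sumr.
have -> : K = \sum_(j < n) c j * \sum_(l < n) c l * K.
  by rewrite -big_distrl /= c_sum1 mul1r -big_distrl /= c_sum1 mul1r.
apply: ler_sum => j _; apply: ler_wpM2l => //; apply: ler_sum => l _.
by rewrite dotvC dotvZl dotvC ler_wpM2l.
Qed.

Lemma convex_comb_subr n (c : 'I_n -> R) (v : 'I_n -> 'rV[R]_d) x y :
  \sum_(j < n) c j = 1 ->
  x + \sum_(j < n) c j *: (v j - x) - y = \sum_(j < n) c j *: (v j - y).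
Proof.
move=> c_sum1.
have split_diff j : c j *: (v j - y) = c j *: (v j - x) + c j *: (x - y).
  by rewrite -scalerDr addrA subrK.
rewrite (eq_bigr _ (fun j _ => split_diff j)) big_split /= -scaler_suml c_sum1.
by rewrite scale1r addrAC addrC.
Qed.

Lemma near_orthogonal_dotv_le (C eps : R) u v :
  0 <= eps -> enorm u ^+ 2 <= C -> enorm v ^+ 2 <= C ->
  `|dotv u v| <= eps * enorm u * enorm v -> `|dotv u v| <= eps * C.
Proof.
move=> eps_ge0 uC vC /le_trans; apply.
rewrite -mulrA ler_wpM2l //.
have := enorm_ge0 u; have := enorm_ge0 v; nra.
Qed.

(* eps <= 1 is needed when i, j, l are pairwise distinct: then the bound is
   |t i|^2 + 3 eps C, which must fit in 2C(1 + eps). *)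
Lemma dotv_shift_le {n} (t : 'I_n -> 'rV[R]_d) (C eps : R) :
  0 <= C -> 0 <= eps -> eps <= 1 ->
  (forall j, dotv (t j) (t j) <= C) ->
  (forall j l, j != l -> `|dotv (t j) (t l)| <= eps * C) ->
  forall i j l, dotv (t j - t i) (t l - t i) <= 2 * C * (1 + eps).
Proof.
move=> C_ge0 eps_ge0 eps_le1 tC orth i j l.
have bound_ge0 : 0 <= 2 * C * (1 + eps) by rewrite !mulr_ge0 // addr_ge0.
case: (eqVneq j i) => [->|ji]; first by rewrite subrr dotv0l.
case: (eqVneq l i) => [->|li]; first by rewrite subrr dotv0r.
rewrite dotvBl !dotvBr (dotvC (t i) (t l)).
have epsC_leC : eps * C <= C by rewrite ler_piMl.
have := tC i; have := tC j; have := orth _ _ ji; have := orth _ _ li.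
rewrite !ler_norml.
case: (eqVneq j l) => [->|jl]; first by move=> *; lra.
have := orth _ _ jl; rewrite ler_norml => *; lra.
Qed.

Lemma stationary_smooth_le (f : 'rV[R]_d -> R) th (L r : R) :
  'd f th = (fun _ => 0) :> ('rV[R]_d -> R) -> 0 <= L ->
  (forall y, enorm (y - th) <= r ->
     `|f y - f th - 'd f th (y - th)| <= L / 2 * enorm (y - th) ^+ 2) ->
  forall x D, enorm (x - th) <= r -> enorm (x - th) ^+ 2 <= D ->
  f x - f th <= L / 2 * D.
Proof.
move=> df0 L_ge0 smooth x D xr xD.
have := smooth x xr; rewrite df0 subr0 => /(le_trans (ler_norm _)) /le_trans.
by apply; rewrite ler_wpM2l // divr_ge0.
Qed.

Lemma enorm_le_twice_sqrt (C eps : R) u :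
  0 <= C -> eps <= 1 -> enorm u ^+ 2 <= 2 * C * (1 + eps) ->
  enorm u <= 2 * Num.sqrt C.
Proof.
move=> C_ge0 eps_le1 uC.
have sqrtC2 : Num.sqrt C ^+ 2 = C by rewrite sqr_sqrtr.
have := enorm_ge0 u; have := sqrtr_ge0 C; nra.
Qed.

End InnerProduct.

Lemma simplex_mixture (R : realType) (T M : nat) (W : 'M[R]_(T, M))
    (alpha : 'I_M -> R) :
  (forall m, in_simplex (fun j => W j m)) -> in_simplex alpha ->
  in_simplex (fun j => \sum_(m < M) alpha m * W j m).
Proof.
move=> W_simplex [alpha_ge0 alpha_sum1]; split.
  by move=> j; apply: sumr_ge0 => m _; rewrite mulr_ge0 // (W_simplex m).1.
rewrite exchange_big /= -alpha_sum1; apply: eq_bigr => m _.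
by rewrite -big_distrr /= (W_simplex m).2 mulr1.
Qed.

Lemma merged_sum_mixture (R : realType) (d T M : nat) (W : 'M[R]_(T, M))
    (alpha : 'I_M -> R) (tau : 'I_T -> 'rV[R]_d) :
  \sum_(m < M) alpha m *: \sum_(j < T) W j m *: tau j =
  \sum_(j < T) (\sum_(m < M) alpha m * W j m) *: tau j.
Proof.
under eq_bigr => m _ do rewrite scaler_sumr.
rewrite exchange_big; apply: eq_bigr => j _.
by rewrite scaler_suml; apply: eq_bigr => m _; rewrite scalerA.
Qed.

Theorem mainTheorem5 (R : realType) (d T M : nat)
  (theta0 : 'rV[R]_d) (theta : 'I_T -> 'rV[R]_d)
  (Loss : 'I_T -> 'rV[R]_d -> R)
  (C r eps : R) (Lc : 'I_T -> R)
  (W : 'M[R]_(T, M)) (alpha : 'I_M -> R) :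
  (* each loss is differentiable *)
  (forall i x, differentiable (Loss i) x) ->
  (* fine-tuning regime *)
  (forall i, 'd (Loss i) (theta i) = (fun _ => 0) :> ('rV[R]_d -> R)) ->
  0 < C ->
  (forall i, enorm (theta i - theta0) ^+ 2 <= C) ->
  (* local smoothness with radius r *)
  0 < r ->
  (forall i, 0 <= Lc i) ->
  (forall i x, enorm (x - theta i) <= r ->
     `| Loss i x - Loss i (theta i) - 'd (Loss i) (theta i) (x - theta i) |
       <= Lc i / 2 * enorm (x - theta i) ^+ 2) ->
  2 * Num.sqrt C <= r ->
  (* near-orthogonality of the task vectors *)
  0 < eps -> eps <= 1 ->
  (forall i j, i != j ->
     `| dotv (theta i - theta0) (theta j - theta0) |
       <= eps * enorm (theta i - theta0) * enorm (theta j - theta0)) ->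
  (* merging weights *)
  (forall m, in_simplex (fun j => W j m)) ->
  in_simplex alpha ->
  let B := fun m : 'I_M => \sum_(j < T) W j m *: (theta j - theta0) in
  let thetaAdd := theta0 + \sum_(m < M) alpha m *: B m in
  forall i, Loss i thetaAdd - Loss i (theta i) <= Lc i * C * (1 + eps).
Proof.
move=> _ df0 C_gt0 tauC _ L_ge0 smooth Cr eps_gt0 eps_le1 orth W_simplex
  alpha_simplex B thetaAdd i.
set c := fun j => \sum_(m < M) alpha m * W j m.
have c_simplex : in_simplex c by exact: simplex_mixture.
pose tau (j : 'I_T) : 'rV[R]_d := theta j - theta0.
have tau_sqr k : dotv (tau k) (tau k) <= C by rewrite -enorm_sqr; apply: tauC.
have tau_orth k l : k != l -> `|dotv (tau k) (tau l)| <= eps * C.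
  move=> kl; apply: (near_orthogonal_dotv_le C eps (tau k) (tau l)).
  - exact: ltW.
  - exact: tauC.
  - exact: tauC.
  - exact: orth.
have diff_eq : thetaAdd - theta i = \sum_(j < T) c j *: (tau j - tau i).
  rewrite /thetaAdd /B merged_sum_mixture convex_comb_subr ?c_simplex.2 //.
  by apply: eq_bigr => j _; rewrite /tau opprB addrA subrK.
have dist2 : enorm (thetaAdd - theta i) ^+ 2 <= 2 * C * (1 + eps).
  rewrite diff_eq enorm_sqr; apply: dotv_convex_le => // j l.
  by apply: (dotv_shift_le tau C eps) => //; exact: ltW.
have dist_r : enorm (thetaAdd - theta i) <= r.
  apply: le_trans Cr; apply: (enorm_le_twice_sqrt C eps) => //; exact: ltW.
have := stationary_smooth_le (Loss i) (theta i) (Lc i) r (df0 i) (L_ge0 i)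
  (smooth i) _ _ dist_r dist2.
suff -> : Lc i / 2 * (2 * C * (1 + eps)) = Lc i * C * (1 + eps) by [].
by rewrite -!mulrA mulKf ?pnatr_eq0.
Qed.
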